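(* Let $\Lambda$ be a cohomology algebra of $b^+=1$ type with $2\tilde\chi(\Lambda)+3\sigma(\Lambda)\ge0$ falling into Case (1), (3) or (5) below, and let $A=aF+bB$ be a reduced class with $A\cdot A\ge0$. Then: Case (1): $h(A)<0$ iff $a>1$ and $b=0$; $h(A)=0$ iff $a\ge b=1$, or $(a,b)\in\{(1,0),(0,0)\}$. Case (3): $h(A)<0$ iff $a>1$ and $b=0$; $h(A)=0$ iff $(a,b)\in\{(1,0),(0,0)\}$. Case (5): $h(A)<0$ iff $a>1$ and $b=0$; $h(A)=0$ iff $(a,b)\in\{(1,0),(0,0)\}$. In all other cases $h(A)>0$. Moreover, in Case (2) every nonzero $A$ with $A\cdot A\ge0$ has $h(A)>0$.
   Context: Notation: $\Lambda$ a cohomology algebra (graded commutative algebra over $\mathbb{Z}$, free of finite rank in each degree, $p:\Lambda^4\cong\mathbb{Z}$ with perfect pairings); $\Gamma(x,y)=x\cdot y=p(xy)$ on $\Lambda^2$, signature $\sigma$; $I_T\subseteq\Lambda^2$ generated by products of elements of $\Lambda^1$; $\tilde b_1=b_1-\mathrm{rank}\{x\in\Lambda^1:x\Lambda^1=0\}$; $\tilde\chi=2+b_2-2\tilde b_1$. Characteristic: $c\cdot A\equiv A\cdot A\pmod2$ for all $A$. Adjunction class: characteristic $c$ with (I) $c\cdot c>\sigma$, or (II) $c\cdot c\ge2\tilde\chi+3\sigma$ and, if $I_T\ne0$, $c\cdot x\ne0$ for some $x\in I_T$. $h_c(A)=1+\frac{A\cdot A-|c\cdot A|}{2}$ for $A\ne0$,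 $h_c(0)=0$; $h(A)=\max_c h_c(A)$. $U=\begin{pmatrix}0&1\\1&0\end{pmatrix}$, $E$ the positive definite $E_8$ form. (1) $I_T=0$, $\Gamma\cong U$; basis $\{F,B\}$, $F\cdot F=B\cdot B=0$, $F\cdot B=1$; reduced: $aF+bB$, $a\ge|b|\ge0$. (2) $I_T=0$, $\Gamma\cong U\oplus(-E)$. (3) $\tilde b_1=2$, $\Gamma\cong U$; $F$ generates $I_T$, basis $\{F,B\}$, $F\cdot F=B\cdot B=0$, $F\cdot B=1$; reduced: $aF+bB$ with $a>0$, or $a=0,b\ge0$. (5) $\tilde b_1=2$, $\Gamma\cong\langle1\rangle\oplus\langle-1\rangle$; $F$ generates $I_T$, basis $\{F,B\}$, $F\cdot F=0$, $F\cdot B=B\cdot B=1$; reduced: $aF+bB$ with $a>0$, or $a=0,b\ge0$. *)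

From HB Require Import structures.
From mathcomp Require Import all_boot all_order all_algebra.
Set Implicit Arguments. Unset Strict Implicit. Unset Printing Implicit Defensive.
Import Order.TTheory GRing.Theory Num.Theory.
Local Open Scope ring_scope.

(* Cohomology algebras (graded commutative Z-algebras, free of finite  *)
(* rank in each degree, Lambda^0 = Z, Lambda^4 identified with Z via p, *)
(* Lambda^k = 0 for k > 4, perfect pairings).                          *)
(* Lambda^k is modelled as 'rV[int]_(b_k); b0 = b4 = 1 (Lambda^0 = Z,   *)
(* acting by scalars; Lambda^4 = Z via p).  Products of positive degree *)
(* are recorded as biadditive maps; the products Lambda^2 x Lambda^1,   *)
(* Lambda^3 x Lambda^1 are determined by graded commutativity.          *)

Definition biadditive (U V W : zmodType) (f : U -> V -> W) : Prop :=
  (forall x x' y, f (x + x') y = f x y + f x' y) /\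
  (forall x y y', f x (y + y') = f x y + f x y').

Definition zadd (U : zmodType) (g : U -> int) : Prop :=
  forall x y, g (x + y) = g x + g y.

Definition perfect (U V : zmodType) (f : U -> V -> int) : Prop :=
  (forall g : V -> int, zadd g -> exists! x : U, forall y, f x y = g y) /\
  (forall g : U -> int, zadd g -> exists! y : V, forall x, f x y = g x).

Record cohom_alg : Type := CohomAlg {
  b1 : nat; b2 : nat; b3 : nat;
  mul11 : 'rV[int]_b1 -> 'rV[int]_b1 -> 'rV[int]_b2;
  mul12 : 'rV[int]_b1 -> 'rV[int]_b2 -> 'rV[int]_b3;
  mul13 : 'rV[int]_b1 -> 'rV[int]_b3 -> int;   (* p(x y), x in L^1, y in L^3 *)
  mul22 : 'rV[int]_b2 -> 'rV[int]_b2 -> int;   (* p(x y), x, y in L^2 *)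
  mul11_bi : biadditive mul11;
  mul12_bi : biadditive mul12;
  mul13_bi : biadditive mul13;
  mul22_bi : biadditive mul22;
  mul11_anti : forall x y, mul11 x y = - mul11 y x;
  mul22_sym : forall x y, mul22 x y = mul22 y x;
  (* associativity (products L^2 L^1 = L^1 L^2, L^3 L^1 = - L^1 L^3) *)
  assoc111 : forall x y z, mul12 z (mul11 x y) = mul12 x (mul11 y z);
  assoc112 : forall x y w, mul22 (mul11 x y) w = mul13 x (mul12 y w);
  assoc121 : forall x w z, - mul13 z (mul12 x w) = mul13 x (mul12 z w);
  assoc211 : forall w x y, - mul13 y (mul12 x w) = mul22 w (mul11 x y);
  perfect13 : perfect mul13;
  perfect22 : perfect mul22
}.

Section Defs.
Variable L : cohom_alg.

Definition dot (x y : 'rV[int]_(b2 L)) : int := @mul22 L x y.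

Definition in_IT (x : 'rV[int]_(b2 L)) : Prop :=
  exists s : seq ('rV[int]_(b1 L) * 'rV[int]_(b1 L)),
    x = \sum_(p <- s) @mul11 L p.1 p.2.

Definition IT_nonzero : Prop := exists x, in_IT x /\ x != 0.
Definition IT_zero : Prop := forall x, in_IT x -> x = 0.

Definition zindep (k n : nat) (V : 'M[int]_(k, n)) : Prop :=
  forall u : 'rV[int]_k, u *m V = 0 -> u = 0.

Definition is_rank_ann1 (r : nat) : Prop :=
  (exists V : 'M[int]_(r, b1 L),
      zindep V /\ forall i y, @mul11 L (row i V) y = 0) /\
  ~ (exists V : 'M[int]_(r.+1, b1 L),
      zindep V /\ forall i y, @mul11 L (row i V) y = 0).

Definition is_bt1 (m : nat) : Prop :=
  exists r, is_rank_ann1 r /\ m = (b1 L - r)%N.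

Definition is_chit (t : int) : Prop :=
  exists m, is_bt1 m /\ t = 2 + (b2 L)%:Z - 2 * m%:Z.

Definition posdef_k (k : nat) : Prop :=
  exists V : 'M[int]_(k, b2 L),
    forall u : 'rV[int]_k, u != 0 -> 0 < dot (u *m V) (u *m V).
Definition negdef_k (k : nat) : Prop :=
  exists V : 'M[int]_(k, b2 L),
    forall u : 'rV[int]_k, u != 0 -> dot (u *m V) (u *m V) < 0.

Definition is_bplus (p : nat) : Prop := posdef_k p /\ ~ posdef_k p.+1.
Definition is_bminus (q : nat) : Prop := negdef_k q /\ ~ negdef_k q.+1.

Definition is_sigma (s : int) : Prop :=
  exists p q, is_bplus p /\ is_bminus q /\ s = p%:Z - q%:Z.

Definition bplus_one : Prop := is_bplus 1.

Definition chi_sigma_nonneg : Prop :=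
  exists s t, is_sigma s /\ is_chit t /\ 0 <= 2 * t + 3 * s.

Definition characteristic (c : 'rV[int]_(b2 L)) : Prop :=
  forall A, (dot c A = dot A A %[mod 2])%Z.

Definition adjunction_class (c : 'rV[int]_(b2 L)) : Prop :=
  characteristic c /\
  exists s t, is_sigma s /\ is_chit t /\
    (s < dot c c \/
     (2 * t + 3 * s <= dot c c /\
      (IT_nonzero -> exists x, in_IT x /\ dot c x != 0))).

Definition hc (c A : 'rV[int]_(b2 L)) : rat :=
  if A == 0 then 0 else 1 + ((dot A A - `|dot c A|)%:~R / 2).

Definition is_h (A : 'rV[int]_(b2 L)) (v : rat) : Prop :=
  (exists c, adjunction_class c /\ hc c A = v) /\
  (forall c, adjunction_class c -> hc c A <= v).

Definition basis2 (F B : 'rV[int]_(b2 L)) : Prop :=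
  forall x, exists! ab : int * int, x = ab.1 *: F + ab.2 *: B.

End Defs.

(* positive definite E8 form (Cartan matrix; Dynkin diagram: chain
   0-1-2-3-4-5-6 with node 7 attached to node 4) *)
Definition E8edge (i j : nat) : bool :=
  [|| (i == 0) && (j == 1), (i == 1) && (j == 2), (i == 2) && (j == 3),
      (i == 3) && (j == 4), (i == 4) && (j == 5), (i == 5) && (j == 6)
    | (i == 4) && (j == 7)]%N.

Definition E8entry (i j : nat) : int :=
  if i == j then 2 else if E8edge i j || E8edge j i then -1 else 0.

Definition E8 : 'M[int]_8 := \matrix_(i < 8, j < 8) E8entry i j.

(* Gram matrix of U + (-E) *)
Definition UmE8 : 'M[int]_10 :=
  \matrix_(i < 10, j < 10)
    if (i < 2)%N && (j < 2)%N then (if i == j :> nat then 0 else 1)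
    else if (2 <= i)%N && (2 <= j)%N then - E8entry (i - 2) (j - 2)
    else 0.

From HB Require Import structures.
From mathcomp Require Import all_boot all_order all_algebra.
From mathcomp Require Import zify ring lra.
Import Order.TTheory GRing.Theory Num.Theory.
Local Open Scope ring_scope.

Set Implicit Arguments. Unset Strict Implicit. Unset Printing Implicit Defensive.

(* In each case h(A) is attained at an explicit adjunction class c0 minimising
   |c . A| over all adjunction classes c, so that 2 h(A) = 2 + A . A - |c0 . A|
   for A <> 0 and the classification becomes a sign computation in (a, b).
   If L^2 has a basis F, B with F . F = 0 and F . B = 1, every rank-2 sublattice
   contains a nonzero multiple of the isotropic class F; hence sigma = 0, and the
   characteristic classes are the g F + d B with d even and g = B . B mod 2.
   When I_T = 0, chi~ = 2 + b2 > 0 and both adjunction conditions force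
   c . c = 2 g d > 0, so |c . A| = |g| b + |d| a >= |(2F + 2B) . A|.
   When b~1 = 2, chi~ = b2 - 2 must vanish and the adjunction classes are the
   characteristic c with c . c >= 0 and d = c . F <> 0. For c0 = 2B - (B . B) F
   write 2 (c . A) = b X + d (c0 . A) with d X = c . c and b (c0 . A) = A . A;
   both summands have the same sign, so |c . A| >= |c0 . A|.
   In Case (2) the form is even and sigma < 0, so 0 is an adjunction class and
   h(A) = 1 + A . A / 2 > 0. *)

Lemma normD_eq (x y : int) : 0 <= x * y -> `|x + y| = `|x| + `|y|.
Proof. by nia. Qed.

Lemma norm_le_mul (b y : int) : b != 0 -> 0 <= b * y -> `|y| <= b * y.
Proof. by move=> b0 hby; rewrite -(ger0_norm hby) normrM ler_peMl //; lia. Qed.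

Lemma even_neq0_norm_ge2 (d : int) : (2 %| d)%Z -> d != 0 -> 2 <= `|d|.
Proof. by lia. Qed.

Lemma dvdz2_sqr_sub (y : int) : (2 %| y * y - y)%Z.
Proof.
have [q [r [-> r01]]] : exists q r : int, y = 2 * q + r /\ (r = 0 \/ r = 1).
  by exists (y %/ 2)%Z, (y %% 2)%Z; lia.
by case: r01 => ->; nia.
Qed.

Lemma norm_even_comb_ge (a b g d : int) : 0 <= a -> 0 <= b ->
  (2 %| g)%Z -> (2 %| d)%Z -> 0 < g * d -> 2 * b + 2 * a <= `|g * b + d * a|.
Proof.
move=> a0 b0 g_even d_even gd_pos; have same_sign : 0 <= (g * b) * (d * a).
  by rewrite mulrACA; apply: mulr_ge0; [exact: ltW | exact: mulr_ge0].
rewrite normD_eq // !normrM (ger0_norm a0) (ger0_norm b0).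
have /andP[/(even_neq0_norm_ge2 g_even) g2 /(even_neq0_norm_ge2 d_even) d2] :
  (g != 0) && (d != 0) by rewrite -negb_or -mulf_eq0; lia.
by nia.
Qed.

Lemma norm_same_sign_comb_ge (b d X Y : int) :
  2 <= `|d| -> 0 <= b * Y -> 0 <= d * X -> 2 * `|Y| <= `|b * X + d * Y|.
Proof.
move=> d2 bY dX; have same_sign : 0 <= (b * X) * (d * Y).
  by rewrite mulrACA (mulrC X) -mulrACA mulr_ge0.
by rewrite normD_eq // !normrM; nia.
Qed.

Lemma sign_trichotomy (R : realDomainType) (v : R) (P Q : Prop) :
  (v < 0 <-> P) -> (v = 0 <-> Q) -> (0 < v <-> ~ P /\ ~ Q).
Proof.
move=> hP hQ; split=> [v_gt0|[nP nQ]].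
  split=> [/hP|/hQ v0]; first by rewrite ltNge (ltW v_gt0).
  by rewrite v0 ltxx in v_gt0.
by case: (ltgtP v 0) => [/hP|//|/hQ].
Qed.

Section IntersectionForm.
Variable L : cohom_alg.
Implicit Types x y : 'rV[int]_(b2 L).

Lemma dotC x y : dot x y = dot y x.
Proof. exact: mul22_sym. Qed.

Lemma dotDl x x' y : dot (x + x') y = dot x y + dot x' y.
Proof. exact: (proj1 (mul22_bi L)). Qed.

Lemma dotDr x y y' : dot x (y + y') = dot x y + dot x y'.
Proof. exact: (proj2 (mul22_bi L)). Qed.

Lemma dot0l y : dot 0 y = 0.
Proof. by apply: (addrI (dot 0 y)); rewrite -dotDl !addr0. Qed.

Lemma dotNl x y : dot (- x) y = - dot x y.
Proof. by apply: (addrI (dot x y)); rewrite -dotDl !subrr dot0l. Qed.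

Lemma dotZl (z : int) x y : dot (z *: x) y = z * dot x y.
Proof.
have dotMnl (n : nat) : dot (n%:Z *: x) y = n%:Z * dot x y.
  elim: n => [|n IHn]; first by rewrite scale0r dot0l mul0r.
  by rewrite intS scalerDl scale1r dotDl IHn mulrDl mul1r.
by case: z => n; rewrite ?NegzE ?scaleNr ?dotNl ?mulNr dotMnl.
Qed.

Lemma dotZr (z : int) x y : dot x (z *: y) = z * dot x y.
Proof. by rewrite dotC dotZl dotC. Qed.

Lemma dot_comb2 (F B : 'rV[int]_(b2 L)) (a b c d : int) :
  dot (a *: F + b *: B) (c *: F + d *: B) =
  a * c * dot F F + (a * d + b * c) * dot F B + b * d * dot B B.
Proof. by rewrite !dotDl !dotDr !dotZl !dotZr (dotC B F); ring. Qed.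

Lemma even_form_of_basis n (V : 'M[int]_(n, b2 L)) :
  (forall x, exists u : 'rV[int]_n, x = u *m V) ->
  (forall i, (2 %| dot (row i V) (row i V))%Z) ->
  forall x, (2 %| dot x x)%Z.
Proof.
move=> Vspan Veven x; have [u ->] := Vspan x; rewrite mulmx_sum_row.
apply: (big_ind (fun x => (2 %| dot x x)%Z)) => [|y z hy hz|i _].
- by rewrite dot0l.
- by rewrite dotDl !dotDr (dotC z y); lia.
- by rewrite dotZl dotZr mulrA dvdz_mull.
Qed.

End IntersectionForm.

Lemma zindep_rowsub1 m k (f : 'I_m -> 'I_k) :
  injective f -> zindep (rowsub f 1%:M : 'M[int]_(m, k)).
Proof.
move=> finj u /rowP u_f; apply/rowP => i; have := u_f (f i).
rewrite !mxE (bigD1 i) //= big1 => [|j ji]; rewrite !mxE ?eqxx ?mulr1 ?addr0 //.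
by rewrite (inj_eq finj) (negbTE ji) mulr0.
Qed.

Lemma zindep_rowsub m k n (f : 'I_m -> 'I_k) (V : 'M[int]_(k, n)) :
  injective f -> zindep V -> zindep (rowsub f V).
Proof.
by move=> finj Vind u; rewrite rowsubE mulmxA => /Vind; apply: zindep_rowsub1.
Qed.

Lemma widen_ord_inj m k (mk : (m <= k)%N) : injective (widen_ord mk).
Proof. by move=> i j [] /val_inj. Qed.
Arguments widen_ord_inj {m k} mk.

Lemma mul_rV2 (R : pzRingType) n (u : 'rV[R]_2) (V : 'M[R]_(2, n)) :
  u *m V = u 0 0 *: row 0 V + u 0 1 *: row 1 V.
Proof.
rewrite mulmx_sum_row !big_ord_recl big_ord0 addr0.
by congr (u 0 _ *: row _ V + u 0 _ *: row _ V); apply: val_inj.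
Qed.

Lemma rV2_eq0 (R : pzRingType) (u : 'rV[R]_2) : u 0 0 = 0 -> u 0 1 = 0 -> u = 0.
Proof. by move=> u00 u01; rewrite -[u]mulmx1 mul_rV2 u00 u01 !scale0r addr0. Qed.

Section Invariants.
Variable L : cohom_alg.
Implicit Types x y : 'rV[int]_(b2 L).

Lemma posdef_k_le j k : (j <= k)%N -> posdef_k L k -> posdef_k L j.
Proof.
move=> jk [V Vpos]; exists (rowsub (widen_ord jk) V) => u u0.
rewrite rowsubE mulmxA; apply: Vpos; apply: contra u0 => /eqP.
by move/(zindep_rowsub1 (widen_ord_inj jk)) ->.
Qed.

Lemma negdef_k_le j k : (j <= k)%N -> negdef_k L k -> negdef_k L j.
Proof.
move=> jk [V Vneg]; exists (rowsub (widen_ord jk) V) => u u0.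
rewrite rowsubE mulmxA; apply: Vneg; apply: contra u0 => /eqP.
by move/(zindep_rowsub1 (widen_ord_inj jk)) ->.
Qed.

Lemma posdef_k1 x : 0 < dot x x -> posdef_k L 1.
Proof.
move=> x_pos; exists x => u u0; rewrite [u]mx11_scalar mul_scalar_mx dotZl dotZr.
have u00 : u 0 0 != 0 by apply: contra u0 => /eqP u00; rewrite [u]mx11_scalar u00 raddf0.
by rewrite mulrA mulr_gt0 // lt_def mulf_neq0 //= -expr2 sqr_ge0.
Qed.

Lemma negdef_k1 x : dot x x < 0 -> negdef_k L 1.
Proof.
move=> x_neg; exists x => u u0; rewrite [u]mx11_scalar mul_scalar_mx dotZl dotZr.
have u00 : u 0 0 != 0 by apply: contra u0 => /eqP u00; rewrite [u]mx11_scalar u00 raddf0.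
by rewrite mulrA pmulr_rlt0 // lt_def mulf_neq0 //= -expr2 sqr_ge0.
Qed.

Lemma negdef_k2 x y :
  dot x x = -2 -> dot y y = -2 -> dot x y = 1 -> negdef_k L 2.
Proof.
move=> xx yy xy; exists (\matrix_(i < 2) [:: x; y]`_i) => u u0.
rewrite mul_rV2 !rowK /= !(dotDl, dotDr, dotZl, dotZr) (dotC y x) xx yy xy.
have : u 0 0 <> 0 \/ u 0 1 <> 0.
  have [u00|] := eqVneq (u 0 0) 0; last by left; apply/eqP.
  have [u01|] := eqVneq (u 0 1) 0; last by right; apply/eqP.
  by rewrite (rV2_eq0 u00 u01) eqxx in u0.
by case=> ?; nia.
Qed.

Lemma is_rank_ann1_le r r' : is_rank_ann1 L r -> is_rank_ann1 L r' -> (r' <= r)%N.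
Proof.
move=> [_ no_ann] [[V [Vind Vann]] _]; rewrite leqNgt; apply/negP => rr'.
apply: no_ann; exists (rowsub (widen_ord rr') V); split.
  exact: zindep_rowsub (widen_ord_inj rr') Vind.
by move=> i y; rewrite row_rowsub Vann.
Qed.

Lemma is_bt1_uniq m m' : is_bt1 L m -> is_bt1 L m' -> m = m'.
Proof.
move=> [r [hr ->]] [r' [hr' ->]]; congr (_ - _)%N.
by apply/eqP; rewrite eqn_leq !(is_rank_ann1_le hr hr', is_rank_ann1_le hr' hr).
Qed.

Lemma is_chit_bt1 m t : is_bt1 L m -> is_chit L t -> t = 2 + (b2 L)%:Z - 2 * m%:Z.
Proof. by move=> hm [m' [hm' ->]]; rewrite (is_bt1_uniq hm' hm). Qed.

Lemma is_chit_IT_zero t : IT_zero L -> is_chit L t -> t = 2 + (b2 L)%:Z.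
Proof.
move=> IT0 [m [[r [hr ->]] ->]]; suff -> : (b1 L - r = 0)%N by rewrite mulr0 subr0.
apply/eqP; rewrite subn_eq0 leqNgt; apply/negP => r_lt_b1; case: hr => _; apply.
exists (rowsub (widen_ord r_lt_b1) 1%:M); split.
  exact: zindep_rowsub1 (widen_ord_inj r_lt_b1).
by move=> i y; apply: IT0; exists [:: (row i (rowsub (widen_ord r_lt_b1) 1%:M), y)];
  rewrite big_seq1.
Qed.

Lemma is_sigma_lt0 s : ~ posdef_k L 2 -> negdef_k L 2 -> is_sigma L s -> s < 0.
Proof.
move=> no_pos2 neg2 [p [q [[hp _] [[_ no_negq1] ->]]]].
have p1 : (p <= 1)%N by rewrite leqNgt; apply/negP => p2; apply: no_pos2 (posdef_k_le p2 hp).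
have q2 : (2 <= q)%N by rewrite leqNgt; apply/negP => q1; apply: no_negq1 (negdef_k_le q1 neg2).
by lia.
Qed.

End Invariants.

Section HyperbolicBasis.
Variables (L : cohom_alg) (F B : 'rV[int]_(b2 L)).
Hypotheses (FB_basis : basis2 F B) (FF0 : dot F F = 0) (FB1 : dot F B = 1).
Implicit Types c : 'rV[int]_(b2 L).

Lemma comb_basis c : exists g d, c = g *: F + d *: B.
Proof. by have [[g d] [/= c_gd _]] := FB_basis c; exists g, d. Qed.

Lemma comb_eq0 a b : a *: F + b *: B = 0 <-> a = 0 /\ b = 0.
Proof.
split=> [ab0|[-> ->]]; last by rewrite !scale0r addr0.
have [p [_ p_uniq]] := FB_basis 0.
have := p_uniq (0, 0); rewrite !scale0r addr0 => /(_ erefl).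
by rewrite (p_uniq (a, b) (esym ab0)) => -[].
Qed.

Lemma dot_comb g d a b :
  dot (g *: F + d *: B) (a *: F + b *: B) = g * b + d * a + d * b * dot B B.
Proof. by rewrite dot_comb2 FF0 FB1; ring. Qed.

Lemma dot_combF g d : dot (g *: F + d *: B) F = d.
Proof. by rewrite -[F in dot _ F]scale1r -[F in dot _ F]addr0 -(scale0r B) dot_comb; ring. Qed.

Lemma dot_combB g d : dot (g *: F + d *: B) B = g + d * dot B B.
Proof. by rewrite -[B in dot _ B]scale1r -[B in dot _ B]add0r -(scale0r F) dot_comb; ring. Qed.

Lemma rank2_meets_isotropic_line (V : 'M[int]_(2, b2 L)) :
  exists2 u : 'rV[int]_2, u != 0 & exists p, u *m V = p *: F.
Proof.
have [a0 [b0 V0]] := comb_basis (row 0 V); have [a1 [b1 V1]] := comb_basis (row 1 V).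
have [x [y [xy0 kill_B]]] : exists x y : int, (x != 0) || (y != 0) /\ x * b0 + y * b1 = 0.
  case: (eqVneq b0 0) => [->|b00]; first by exists 1, 0; split=> //; ring.
  by exists b1, (- b0); rewrite oppr_eq0 b00 orbT; split=> //; ring.
exists (\row_j [:: x; y]`_j).
  by apply: contraTneq xy0 => /rowP u0; move: (u0 0) (u0 1); rewrite !mxE /= => -> ->.
exists (x * a0 + y * a1); rewrite mul_rV2 !mxE /= V0 V1 !scalerDr !scalerA addrACA.
by rewrite -!scalerDl kill_B scale0r addr0.
Qed.

Lemma is_sigma_hyperbolic s : is_sigma L s -> s = 0.
Proof.
have no_def2 (V : 'M[int]_(2, b2 L)) : exists2 u : 'rV[int]_2, u != 0 &
    dot (u *m V) (u *m V) = 0.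
  have [u u0 [p uV]] := rank2_meets_isotropic_line V.
  by exists u; rewrite // uV dotZl dotZr FF0 !mulr0.
pose x t : 'rV[int]_(b2 L) := t *: F + 1 *: B.
have dot_x t : dot (x t) (x t) = 2 * t + dot B B by rewrite dot_comb; ring.
have bplus p : is_bplus L p -> p = 1%N.
  case=> hp no_p1; case: p hp no_p1 => [|[|p]] // hp no_p1.
    by case: no_p1; apply: (@posdef_k1 _ (x (1 + `|dot B B|))); rewrite dot_x; lia.
  have [V Vpos] := posdef_k_le (isT : (2 <= p.+2)%N) hp.
  by have [u u0] := no_def2 V; have := Vpos u u0 => /[swap] ->; rewrite ltxx.
have bminus q : is_bminus L q -> q = 1%N.
  case=> hq no_q1; case: q hq no_q1 => [|[|q]] // hq no_q1.
    by case: no_q1; apply: (@negdef_k1 _ (x (- 1 - `|dot B B|))); rewrite dot_x; lia.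
  have [V Vneg] := negdef_k_le (isT : (2 <= q.+2)%N) hq.
  by have [u u0] := no_def2 V; have := Vneg u u0 => /[swap] ->; rewrite ltxx.
by case=> p [q [/bplus -> [/bminus -> ->]]].
Qed.

Lemma b2_le2 : (b2 L <= 2)%N.
Proof.
suff F_B_span : (1%:M <= col_mx (map_mx (intr : int -> rat) F) (map_mx intr B))%MS.
  by have := mxrankS F_B_span; rewrite mxrank1 => /leq_trans; apply; apply: rank_leq_row.
apply/row_subP => i; have [a [b e_i]] := comb_basis (delta_mx 0 i).
rewrite rowE mulmx1 -(map_delta_mx (intr : int -> rat)) e_i map_mxD !map_mxZ.
by apply/submxP; exists (row_mx a%:~R%:M b%:~R%:M); rewrite mul_row_col !mul_scalar_mx.
Qed.

Lemma characteristic_comb g d :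
  characteristic (g *: F + d *: B) <-> (2 %| d)%Z /\ (2 %| g - dot B B)%Z.
Proof.
split=> [c_char|[d_even g_e]].
  have := c_char F; have := c_char B; rewrite dot_combF dot_combB FF0 => cB cF.
  have d_even : (2 %| d)%Z by lia.
  by split=> //; move: d_even cB => /dvdzP[k ->]; nia.
move=> A; have [x [y ->]] := comb_basis A; rewrite !dot_comb.
have := dvdz2_sqr_sub y; move: d_even g_e => /dvdzP[k ->] /dvdzP[l g_eq].
have -> : g = l * 2 + dot B B by lia.
move=> /dvdzP[m /(canRL (subrK y)) yy]; apply/eqP; rewrite eqz_mod_dvd yy; apply/dvdzP.
by exists (l * y + k * x + k * y * dot B B - x * y - m * dot B B); ring.
Qed.

Lemma adjunction_class_IT_zero c : chi_sigma_nonneg L -> IT_zero L ->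
  adjunction_class c <-> characteristic c /\ 0 < dot c c.
Proof.
move=> [s0 [t0 [hs0 [ht0 _]]]] IT0; split=> [[c_char [s [t [hs [ht adj]]]]]|[c_char cc]].
  rewrite (is_sigma_hyperbolic hs) (is_chit_IT_zero IT0 ht) in adj.
  by split=> //; case: adj => [|[]]; lia.
split=> //; exists s0, t0; do 2!split=> //.
by left; rewrite (is_sigma_hyperbolic hs0).
Qed.

Lemma adjunction_class_bt1_2 c : chi_sigma_nonneg L -> is_bt1 L 2 ->
  (forall x, in_IT x <-> exists n : int, x = n *: F) ->
  adjunction_class c <-> [/\ characteristic c, 0 <= dot c c & dot c F != 0].
Proof.
move=> [s0 [t0 [hs0 [ht0 st0]]]] bt1_2 IT_F.
have chit0 t : is_chit L t -> t = 0.
  move=> ht; move: st0; rewrite (is_sigma_hyperbolic hs0) (is_chit_bt1 bt1_2 ht0).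
  by rewrite (is_chit_bt1 bt1_2 ht); have := b2_le2; lia.
have F_IT : in_IT F by apply/IT_F; exists 1; rewrite scale1r.
have F0 : F != 0.
  apply/eqP => F0; have [] // := (comb_eq0 1 0).1.
  by rewrite scale1r scale0r addr0.
split=> [[c_char [s [t [hs [ht adj]]]]]|[c_char cc cF]].
  rewrite (is_sigma_hyperbolic hs) (chit0 _ ht) in adj.
  have [g [d c_gd]] := comb_basis c; subst c; rewrite dot_combF.
  split=> //; first by case: adj => [|[]]; lia.
  case: adj => [|[_ /(_ (ex_intro _ F (conj F_IT F0)))[_ [/IT_F[n ->]]]]].
    by rewrite dot_comb; apply: contraTneq => ->; rewrite !(mul0r, mulr0, addr0) ltxx.
  by rewrite dotZr dot_combF; apply: contraNneq => ->; rewrite mulr0.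
split=> //; exists s0, t0; do 2!split=> //; right.
rewrite (is_sigma_hyperbolic hs0) (chit0 _ ht0); split=> // _.
by exists F.
Qed.

End HyperbolicBasis.

Section GenusFunction.
Variable L : cohom_alg.
Implicit Types A c : 'rV[int]_(b2 L).

Lemma hc0 c : hc c 0 = 0.
Proof. by rewrite /hc eqxx. Qed.

Lemma hc_le_norm c c' A : `|dot c A| <= `|dot c' A| -> hc c' A <= hc c A.
Proof.
rewrite /hc; case: eqP => // _ cc'; rewrite lerD2l ler_wpM2r // ler_int.
by rewrite lerD2l lerN2.
Qed.

Lemma is_h_argmin A c0 : adjunction_class c0 ->
  (forall c, adjunction_class c -> `|dot c0 A| <= `|dot c A|) -> is_h A (hc c0 A).
Proof. by move=> c0_adj c0_min; split=> [|c /c0_min /hc_le_norm //]; exists c0. Qed.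

Definition sign_classifies (v : rat) (P Q : Prop) :=
  (v < 0 <-> P) /\ (v = 0 <-> Q) /\ (0 < v <-> ~ P /\ ~ Q).

Lemma hc_classify c A (P Q : Prop) :
  (A = 0 -> ~ P /\ Q) ->
  (A != 0 -> (2 + dot A A - `|dot c A| < 0 <-> P) /\ (2 + dot A A - `|dot c A| = 0 <-> Q)) ->
  sign_classifies (hc c A) P Q.
Proof.
move=> A0_PQ w_PQ.
suff [hP hQ] : (hc c A < 0 <-> P) /\ (hc c A = 0 <-> Q).
  by do 2!split=> //; apply: sign_trichotomy.
have [A0|A0] := eqVneq A 0.
  by have [nP hQ] := A0_PQ A0; rewrite A0 hc0 ltxx; split; split=> // /nP.
have [wP wQ] := w_PQ A0; set w := 2 + _ - _ in wP wQ.
have -> : hc c A = w%:~R / 2 by rewrite /hc (negbTE A0) /w -addrA rmorphD /=; field.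
rewrite pmulr_llt0 ?invr_gt0 // ltrz0 -wP -wQ; split=> //.
split=> [/eqP|->]; last by rewrite mulr0z mul0r.
by rewrite mulf_eq0 invr_eq0 intr_eq0 => /orP[/eqP|].
Qed.

Lemma hc0_gt0 A : A != 0 -> 0 <= dot A A -> 0 < hc 0 A.
Proof.
rewrite /hc => /negbTE -> AA; rewrite dot0l normr0 subr0.
have : (0 : rat) <= (dot A A)%:~R by rewrite ler0z.
by move: (_%:~R) => x; lra.
Qed.

Lemma adjunction_class0 s t : (forall x : 'rV[int]_(b2 L), (2 %| dot x x)%Z) ->
  is_sigma L s -> s < 0 -> is_chit L t -> adjunction_class (0 : 'rV[int]_(b2 L)).
Proof.
move=> even hs s_lt0 ht; split=> [A|]; first by rewrite dot0l; have := even A; lia.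
by exists s, t; do 2!split=> //; left; rewrite dot0l.
Qed.

End GenusFunction.

Lemma sign_IT_zero (a b : int) : 0 <= b -> b <= a -> ~ (a = 0 /\ b = 0) ->
  (2 + 2 * a * b - `|2 * b + 2 * a| < 0 <-> 1 < a /\ b = 0) /\
  (2 + 2 * a * b - `|2 * b + 2 * a| = 0 <->
     (1 <= a /\ b = 1) \/ (a = 1 /\ b = 0) \/ (a = 0 /\ b = 0)).
Proof.
move=> b0 ba ab0; rewrite ger0_norm; last lia.
have -> : 2 + 2 * a * b - (2 * b + 2 * a) = 2 * ((a - 1) * (b - 1)) by ring.
by split; split; nia.
Qed.

Lemma sign_bt1_2 (e a b : int) :
  0 <= a -> 0 <= b * (2 * a + e * b) -> ~ (a = 0 /\ b = 0) ->
  (2 + b * (2 * a + e * b) - `|2 * a + e * b| < 0 <-> 1 < a /\ b = 0) /\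
  (2 + b * (2 * a + e * b) - `|2 * a + e * b| = 0 <-> (a = 1 /\ b = 0) \/ (a = 0 /\ b = 0)).
Proof.
move=> a0 AA ab0; have [b0|b0] := eqVneq b 0.
  by subst b; rewrite !(mul0r, mulr0, addr0); split; split; lia.
by have := norm_le_mul b0 AA; split; split; lia.
Qed.

Section Classification.
Variables (L : cohom_alg) (F B : 'rV[int]_(b2 L)).
Hypotheses (FB_basis : basis2 F B) (FF0 : dot F F = 0) (FB1 : dot F B = 1).

Lemma h_classification_IT_zero a b :
  chi_sigma_nonneg L -> IT_zero L -> dot B B = 0 -> `|b| <= a ->
  0 <= dot (a *: F + b *: B) (a *: F + b *: B) ->
  exists v, is_h (a *: F + b *: B) v /\
    sign_classifies v (1 < a /\ b = 0)
      ((1 <= a /\ b = 1) \/ (a = 1 /\ b = 0) \/ (a = 0 /\ b = 0)).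
Proof.
move=> cs IT0 BB0 ba; rewrite dot_comb // BB0 => AA.
have [a0 b0] : 0 <= a /\ 0 <= b by nia.
have adjP := adjunction_class_IT_zero FB_basis FF0 FB1 _ cs IT0.
exists (hc (2 *: F + 2 *: B) (a *: F + b *: B)); split.
  apply: is_h_argmin => [|c /adjP [c_char cc]].
    by apply/adjP; rewrite characteristic_comb // dot_comb // BB0.
  have [g [d c_gd]] := comb_basis FB_basis c.
  move: c_char cc; rewrite c_gd characteristic_comb // !dot_comb // BB0 subr0.
  move=> [d_even g_even] gd_pos; rewrite !(mulr0, addr0) ger0_norm; last lia.
  by apply: norm_even_comb_ge => //; lia.
apply: hc_classify => [/comb_eq0 [] // -> -> | /eqP]; first by split; lia.
rewrite !dot_comb // BB0 comb_eq0 // => ab0.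
rewrite !(mulr0, addr0) (_ : a * b + b * a = 2 * a * b); last by ring.
by apply: sign_IT_zero => //; lia.
Qed.

Lemma h_classification_bt1_2 a b :
  chi_sigma_nonneg L -> is_bt1 L 2 -> (forall x, in_IT x <-> exists n : int, x = n *: F) ->
  (0 < a \/ (a = 0 /\ 0 <= b)) ->
  0 <= dot (a *: F + b *: B) (a *: F + b *: B) ->
  exists v, is_h (a *: F + b *: B) v /\
    sign_classifies v (1 < a /\ b = 0) ((a = 1 /\ b = 0) \/ (a = 0 /\ b = 0)).
Proof.
move=> cs bt1_2 IT_F reduced; rewrite dot_comb // => AA.
have a0 : 0 <= a by lia.
have adjP := adjunction_class_bt1_2 FB_basis FF0 FB1 _ cs bt1_2 IT_F.
have c0A : dot ((- dot B B) *: F + 2 *: B) (a *: F + b *: B) = 2 * a + dot B B * b.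
  by rewrite dot_comb //; ring.
have AA' : 0 <= b * (2 * a + dot B B * b) by lia.
exists (hc ((- dot B B) *: F + 2 *: B) (a *: F + b *: B)); split.
  apply: is_h_argmin => [|c /adjP [c_char cc cF]].
    apply/adjP; split; rewrite ?characteristic_comb ?dot_comb ?dot_combF //.
      by split; lia.
    by rewrite mulrN; lia.
  have [g [d c_gd]] := comb_basis FB_basis c.
  move: c_char cc cF; rewrite c0A c_gd characteristic_comb // dot_combF // !dot_comb //.
  move=> [d_even _] cc /(even_neq0_norm_ge2 d_even) d2.
  rewrite -(ler_pM2l (isT : (0 : int) < 2)).
  rewrite -[X in X * `|_ + _ + _|](ger0_norm (isT : (0 : int) <= 2)) -normrM.
  rewrite (_ : 2 * (g * b + d * a + d * b * dot B B) =
    b * (2 * g + d * dot B B) + d * (2 * a + dot B B * b)); last by ring.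
  by apply: norm_same_sign_comb_ge => //; lia.
apply: hc_classify => [/comb_eq0 [] // -> -> | /eqP]; first by split; lia.
rewrite c0A dot_comb // comb_eq0 // => ab0.
have -> : a * b + b * a + b * b * dot B B = b * (2 * a + dot B B * b) by ring.
by apply: sign_bt1_2.
Qed.

End Classification.

Lemma UmE8_diag_even (i : 'I_10) : (2 %| UmE8 i i)%Z.
Proof. by rewrite mxE eqxx /E8entry eqxx; case: ifP => //; case: ifP. Qed.

Theorem mainTheorem10 :
  (* Case (1) *)
  (forall (L : cohom_alg) (F B : 'rV[int]_(b2 L)) (a b : int),
     bplus_one L -> chi_sigma_nonneg L -> IT_zero L ->
     basis2 F B -> dot F F = 0 -> dot B B = 0 -> dot F B = 1 ->
     `|b| <= a ->
     0 <= dot (a *: F + b *: B) (a *: F + b *: B) ->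
     exists v, is_h (a *: F + b *: B) v /\
       (v < 0 <-> (1 < a /\ b = 0)) /\
       (v = 0 <-> ((1 <= a /\ b = 1) \/ (a = 1 /\ b = 0) \/ (a = 0 /\ b = 0))) /\
       (0 < v <-> ~ (1 < a /\ b = 0) /\
                  ~ ((1 <= a /\ b = 1) \/ (a = 1 /\ b = 0) \/ (a = 0 /\ b = 0))))
  /\
  (* Case (2) *)
  (forall (L : cohom_alg),
     bplus_one L -> chi_sigma_nonneg L -> IT_zero L ->
     (exists V : 'M[int]_(10, b2 L),
        (forall x, exists! u : 'rV[int]_10, x = u *m V) /\
        (forall i j, dot (row i V) (row j V) = UmE8 i j)) ->
     forall A : 'rV[int]_(b2 L), A != 0 -> 0 <= dot A A ->
     exists v, is_h A v /\ 0 < v)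
  /\
  (* Case (3) *)
  (forall (L : cohom_alg) (F B : 'rV[int]_(b2 L)) (a b : int),
     bplus_one L -> chi_sigma_nonneg L -> is_bt1 L 2 ->
     (forall x, in_IT x <-> exists n : int, x = n *: F) ->
     basis2 F B -> dot F F = 0 -> dot B B = 0 -> dot F B = 1 ->
     (0 < a \/ (a = 0 /\ 0 <= b)) ->
     0 <= dot (a *: F + b *: B) (a *: F + b *: B) ->
     exists v, is_h (a *: F + b *: B) v /\
       (v < 0 <-> (1 < a /\ b = 0)) /\
       (v = 0 <-> ((a = 1 /\ b = 0) \/ (a = 0 /\ b = 0))) /\
       (0 < v <-> ~ (1 < a /\ b = 0) /\ ~ ((a = 1 /\ b = 0) \/ (a = 0 /\ b = 0))))
  /\
  (* Case (5) *)
  (forall (L : cohom_alg) (F B : 'rV[int]_(b2 L)) (a b : int),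
     bplus_one L -> chi_sigma_nonneg L -> is_bt1 L 2 ->
     (forall x, in_IT x <-> exists n : int, x = n *: F) ->
     basis2 F B -> dot F F = 0 -> dot F B = 1 -> dot B B = 1 ->
     (0 < a \/ (a = 0 /\ 0 <= b)) ->
     0 <= dot (a *: F + b *: B) (a *: F + b *: B) ->
     exists v, is_h (a *: F + b *: B) v /\
       (v < 0 <-> (1 < a /\ b = 0)) /\
       (v = 0 <-> ((a = 1 /\ b = 0) \/ (a = 0 /\ b = 0))) /\
       (0 < v <-> ~ (1 < a /\ b = 0) /\ ~ ((a = 1 /\ b = 0) \/ (a = 0 /\ b = 0)))).
Proof.
split; first by move=> L F B a b _ cs IT0 FB FF0 BB0 FB1; exact: h_classification_IT_zero.
split.
  move=> L [_ no_pos2] [s [t [hs [ht _]]]] _ [V [V_basis V_gram]] A A0 AA.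
  exists (hc 0 A); split; last exact: hc0_gt0.
  apply: is_h_argmin => [|c _]; last by rewrite dot0l normr0.
  apply: (adjunction_class0 _ hs _ ht).
    apply: (even_form_of_basis (V := V)) => [x|i]; last by rewrite V_gram UmE8_diag_even.
    by have [u [x_uV _]] := V_basis x; exists u.
  (* rows 2 and 3 of V span a negative definite A2 sublattice of -E8 *)
  by apply: (is_sigma_lt0 no_pos2 _ hs); apply: (@negdef_k2 _ (row 2 V) (row 3 V));
    rewrite V_gram mxE.
(* Cases (3) and (5) differ only in the value of B . B, which is left arbitrary below. *)
by split=> [L F B a b _ cs bt1_2 IT_F FB FF0 _ FB1 | L F B a b _ cs bt1_2 IT_F FB FF0 FB1 _];
  exact: h_classification_bt1_2.
Qed.
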